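(* Let $(\mathcal{X},\rho)$ be a separable metric space with Borel $\sigma$-algebra $\mathcal{B}$, and let $\mathbb{X}$ be a process satisfying condition $\mathrm{FMV}$. Then for any $\delta,\varepsilon>0$ and $m_0\in\mathbb{N}$ there exist $M\in\mathbb{N}$ with $M\ge m_0$ and sets $G_1,\dots,G_M\in\mathcal{B}$ that are pairwise disjoint, each satisfying $\sup_{x,x'\in G_i}\rho(x,x')\le\delta$, and such that $\mathbb{P}\big(\exists t:\ X_t\in\mathcal{X}\setminus\bigcup_{i=1}^M G_i\big)<\varepsilon$.
   Context: $\mathrm{FMV}$: the set of processes $\mathbb{X}=(X_t)_{t\ge1}$ in $\mathcal{X}$ such that for every countable partition $\{A_k\}_{k\ge1}$ of $\mathcal{X}$ into sets of $\mathcal{B}$, almost surely $\#\{k:\exists t,\ X_t\in A_k\}<\infty$. *)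

From HB Require Import structures.
From mathcomp Require Import all_boot all_order all_algebra.
From mathcomp Require Import all_classical all_reals all_analysis.
Set Implicit Arguments. Unset Strict Implicit. Unset Printing Implicit Defensive.
Import Order.TTheory GRing.Theory Num.Theory.
Local Open Scope classical_set_scope.
Local Open Scope ring_scope.

Definition is_metric (R : realType) (X : Type) (rho : X -> X -> R) : Prop :=
  [/\ forall x y, 0 <= rho x y,
      forall x y, rho x y = 0 <-> x = y,
      forall x y, rho x y = rho y x &
      forall x y z, rho x z <= rho x y + rho y z].

Definition metric_open (R : realType) (X : Type) (rho : X -> X -> R) : set (set X) :=
  [set A | forall x, A x -> exists2 r : R, 0 < r & [set y | rho x y < r] `<=` A].

Definition metric_separable (R : realType) (X : Type) (rho : X -> X -> R) : Prop :=
  exists D : set X, countable D /\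
    forall x (e : R), 0 < e -> exists2 y, D y & rho x y < e.

Definition is_borel_of (R : realType) (d : measure_display) (X : measurableType d)
  (rho : X -> X -> R) : Prop :=
  (@measurable d X) = <<s metric_open rho >>.

Definition FMV (R : realType) (d : measure_display) (X : measurableType d)
  (dO : measure_display) (Omega : measurableType dO) (P : probability Omega R)
  (Xp : nat -> Omega -> X) : Prop :=
  forall A : nat -> set X,
    (forall k, measurable (A k)) ->
    trivIset setT A ->
    \bigcup_k A k = setT ->
    {ae P, forall w, finite_set [set k | exists t, A k (Xp t w)]}.

(* The balls of radius delta/2 around a countable dense set cover X; making them
   disjoint gives a countable Borel partition A_0, A_1, ... of X into sets of
   diameter at most delta.  Let E_N be the event that the process ever leaves
   A_0 u ... u A_(N-1).  The E_N decrease, and a path lying in every E_N visits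
   infinitely many A_k, so by FMV their intersection is null.  Continuity of P
   from above then makes P(E_N) < eps for all large N. *)
From HB Require Import structures.
From mathcomp Require Import all_boot all_order all_algebra.
From mathcomp Require Import all_classical all_reals all_analysis.
From mathcomp Require Import finmap.
Import Order.TTheory GRing.Theory Num.Theory.
Local Open Scope classical_set_scope.
Local Open Scope ring_scope.

Lemma finite_set_nat_bounded (S : set nat) :
  finite_set S -> exists N, forall k, S k -> (k < N)%N.
Proof.
move=> fS; exists (\max_(k <- fset_set S) k).+1 => k Sk.
rewrite ltnS; apply: leq_bigmax_seq => //.
by rewrite in_fset_set //; apply/mem_set.
Qed.

Section MetricBalls.
Variables (R : realType) (X : Type) (rho : X -> X -> R).
Hypothesis rho_metric : is_metric rho.

Lemma metric_open_ball (y : X) (r : R) : metric_open rho [set x | rho y x < r].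
Proof.
case: rho_metric => _ _ _ rho_tri x ryx.
exists (r - rho y x); first by rewrite subr_gt0.
by move=> z /= rxz; apply: (le_lt_trans (rho_tri y x z)); rewrite -ltrBrDl.
Qed.

Lemma metric_open_bigcup (I : Type) (D : set I) (F : I -> set X) :
  (forall i, D i -> metric_open rho (F i)) -> metric_open rho (\bigcup_(i in D) F i).
Proof.
move=> Fopen x [i Di Fix]; have [r r0 sub] := Fopen i Di x Fix.
by exists r => // z /sub Fiz; exists i.
Qed.

Lemma metric_ball_dist_le (y x x' : X) (r : R) :
  rho y x < r -> rho y x' < r -> rho x x' <= r + r.
Proof.
case: rho_metric => _ _ rho_sym rho_tri ryx ryx'.
apply: (le_trans (rho_tri x y x')); rewrite rho_sym.
by apply: lerD; apply: ltW.
Qed.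

End MetricBalls.

Lemma metric_separable_partition {R : realType} {d : measure_display}
  {X : measurableType d} {rho : X -> X -> R} {delta : R} :
  is_metric rho -> metric_separable rho -> metric_open rho `<=` measurable ->
  0 < delta ->
  exists A : nat -> set X,
    [/\ forall k, measurable (A k),
        trivIset setT A,
        \bigcup_k A k = setT &
        forall k x x', A k x -> A k x' -> rho x x' <= delta].
Proof.
move=> rho_metric [D [/countable_injP[f finj] Ddense]] open_meas delta_gt0.
have [_ _ rho_sym _] := rho_metric.
pose r := delta / 2; have r_gt0 : 0 < r by rewrite divr_gt0.
(* f is injective on D, so B k is the ball around the k-th point of D, or empty. *)
pose B k := \bigcup_(y in [set y | D y /\ f y = k]) [set x | rho y x < r].
have Bcov : \bigcup_k B k = setT.
  apply/seteqP; split => // x _; have [y Dy rxy] := Ddense x r r_gt0.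
  by exists (f y) => //; exists y => //=; rewrite rho_sym.
exists (seqDU B); split.
- apply: seqDU_measurable => k; apply: open_meas.
  by apply: metric_open_bigcup => // y _; apply: metric_open_ball.
- exact: trivIset_seqDU.
- by rewrite -seqDU_bigcup_eq.
- move=> k x x' /(@subset_seqDU _ B k x)[y [Dy fy] ryx]
  /(@subset_seqDU _ B k x')[y' [Dy' fy'] ryx'].
  have yy' : y = y' by apply: finj; [exact/mem_set | exact/mem_set | rewrite fy fy'].
  rewrite {}yy' in ryx.
  by rewrite [delta](splitr delta); apply: metric_ball_dist_le ryx ryx'.
Qed.

Lemma nonincreasing_measure_lt {d : measure_display} {T : measurableType d}
  {R : realType} {mu : {measure set T -> \bar R}} {F : (set T) ^nat} {eps : R} :
  (mu (F 0%N) < +oo)%E -> (forall n, measurable (F n)) -> nonincreasing_seq F ->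
  mu (\bigcap_n F n) = 0%E -> 0 < eps ->
  exists N, forall n, (N <= n)%N -> (mu (F n) < eps%:E)%E.
Proof.
move=> F0_fin Fmeas Fdec mu_cap0 eps_gt0.
have Fcvg := nonincreasing_cvg_mu F0_fin Fmeas (bigcapT_measurable Fmeas) Fdec.
have [|N _ FN] := Fcvg [set y | (y < eps%:E)%E].
  apply: open_nbhs_nbhs; split; first exact: open_ereal_lt_ereal.
  by rewrite mu_cap0 /= lte_fin.
by exists N.
Qed.

Section ProcessEscape.
Context {R : realType} {d : measure_display} {X : measurableType d}.
Context {dO : measure_display} {Omega : measurableType dO}.
Variables (P : probability Omega R) (Xp : nat -> Omega -> X).
Hypothesis Xp_meas : forall t, measurable_fun setT (Xp t).

Definition escapes (U : set X) : set Omega := [set w | exists t, (~` U) (Xp t w)].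

Lemma measurable_escapes (U : set X) : measurable U -> measurable (escapes U).
Proof.
move=> Umeas; have -> : escapes U = \bigcup_t (Xp t @^-1` (~` U)).
  by apply/seteqP; split => w; [case=> t; exists t | case=> t _; exists t].
apply: bigcupT_measurable => t; rewrite -[X in measurable X]setTI.
exact: Xp_meas measurableT _ (measurableC Umeas).
Qed.

Variable A : nat -> set X.
Hypotheses (A_meas : forall k, measurable (A k)) (A_triv : trivIset setT A).
Hypothesis A_cover : \bigcup_k A k = setT.

Definition escapes_first (N : nat) := escapes (\bigcup_(i in [set i | (i < N)%N]) A i).

Lemma measurable_escapes_first N : measurable (escapes_first N).
Proof. exact/measurable_escapes/bigcup_measurable. Qed.

Lemma escapes_first_nonincreasing : nonincreasing_seq escapes_first.
Proof.
move=> n m nm; apply/subsetPset => w [t Xt_out]; exists t => -[k kn Ak].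
by apply: Xt_out; exists k => //=; apply: leq_trans kn nm.
Qed.

(* A path escaping every finite union visits infinitely many A_k. *)
Lemma FMV_escapes_first_null : FMV P Xp -> P (\bigcap_N escapes_first N) = 0%E.
Proof.
move=> fmv; have [N0 [N0_meas PN0 N0_sup]] := fmv A A_meas A_triv A_cover.
have cap_meas : measurable (\bigcap_N escapes_first N).
  exact: bigcapT_measurable measurable_escapes_first.
apply/eqP; rewrite eq_le measure_ge0 andbT -PN0.
apply: le_measure; [exact/mem_set | exact/mem_set |] => w esc.
apply: N0_sup => /finite_set_nat_bounded[N visited_lt].
have [t Xt_out] := esc N I; apply: Xt_out.
have : [set: X] (Xp t w) by [].
by rewrite -A_cover => -[k _ Ak]; exists k => //; apply: visited_lt; exists t.
Qed.

End ProcessEscape.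

Theorem lemma9 (R : realType) (d : measure_display) (X : measurableType d)
  (rho : X -> X -> R)
  (hmetric : is_metric rho) (hsep : metric_separable rho)
  (hborel : is_borel_of rho)
  (dO : measure_display) (Omega : measurableType dO) (P : probability Omega R)
  (Xp : nat -> Omega -> X)
  (hmeas : forall t, measurable_fun setT (Xp t))
  (hfmv : FMV P Xp) :
  forall (delta eps : R), 0 < delta -> 0 < eps -> forall m0 : nat,
  exists (M : nat) (G : nat -> set X),
    [/\ (m0 <= M)%N,
        forall i, (i < M)%N -> measurable (G i),
        forall i j, (i < M)%N -> (j < M)%N -> i <> j -> G i `&` G j = set0,
        forall i, (i < M)%N -> forall x x', G i x -> G i x' -> rho x x' <= delta &
        (P [set w | exists t, (~` \bigcup_(i in [set i | (i < M)%N]) G i) (Xp t w)]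
           < eps%:E)%E].
Proof.
move=> delta eps delta_gt0 eps_gt0 m0.
have open_meas : metric_open rho `<=` measurable.
  by rewrite hborel; apply: sub_sigma_algebra.
have [A [A_meas A_triv A_cover A_diam]] :=
  metric_separable_partition hmetric hsep open_meas delta_gt0.
have esc_meas := measurable_escapes_first _ hmeas _ A_meas.
have esc0_fin : (P (escapes_first Xp A 0) < +oo)%E.
  exact: le_lt_trans (probability_le1 P (esc_meas 0%N)) (ltry _).
have [N PN] := nonincreasing_measure_lt esc0_fin esc_meas
  (escapes_first_nonincreasing Xp A)
  (FMV_escapes_first_null P _ hmeas _ A_meas A_triv A_cover hfmv) eps_gt0.
exists (maxn N m0), A; split => //.
- exact: leq_maxr.
- move=> i j _ _ ij; apply/seteqP; split => // x [Ai Aj].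
  by apply: ij; apply: A_triv => //; exists x.
- by move=> i _; apply: A_diam.
- exact: PN (leq_maxl _ _).
Qed.
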